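(* Let $R(3,n)$ be a rectangular supergrid graph with $n\ge 2$, let $s,t$ be two distinct vertices of it, and let $w=(1,1)$, $z=(2,1)$. Assume that the following conditions fail: (F1) $n=2$ and $s_x=t_x=2$ (i.e. $\{s,t\}$ is a vertex cut of $R(3,2)$); (F2) either $n=2$ and $\{s,t\}\in\{\{(1,1),(2,1)\},\{(1,1),(2,2)\},\{(2,1),(1,2)\}\}$, or $n\ge 3$ and $\{s,t\}=\{w,z\}$. If $s=z$ or $t=z$, then there exists a Hamiltonian $(s,t)$-path $Q$ of $R(3,n)$ such that the edge $(w,z)$ belongs to $Q$.
   Context: The rectangular supergrid graph $R(m,n)$ has vertex set $\{(x,y)\in\mathbb{Z}^2:1\le x\le m,\ 1\le y\le n\}$, two distinct vertices $u=(u_x,u_y)$, $v=(v_x,v_y)$ being adjacent iff $|u_x-v_x|\le 1$ and $|u_y-v_y|\le 1$. A Hamiltonian $(s,t)$-path is a simple path from $s$ to $t$ visiting every vertex exactly once. *)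

From mathcomp Require Import all_boot.
Set Implicit Arguments. Unset Strict Implicit. Unset Printing Implicit Defensive.

Definition vertex := (nat * nat)%type.

Definition in_R (m n : nat) (v : vertex) : bool :=
  (1 <= v.1 <= m) && (1 <= v.2 <= n).

Definition sg_adj (u v : vertex) : bool :=
  (u != v) && (maxn u.1 v.1 - minn u.1 v.1 <= 1)
           && (maxn u.2 v.2 - minn u.2 v.2 <= 1).

Definition ham_path (m n : nat) (s t : vertex) (Q : seq vertex) : Prop :=
  [/\ head s Q = s, last s Q = t, uniq Q,
      (forall v, (v \in Q) = in_R m n v) & sorted sg_adj Q].

Definition path_has_edge (Q : seq vertex) (u v : vertex) : bool :=
  has (fun p => (p == (u, v)) || (p == (v, u))) (zip Q (behead Q)).

From mathcomp Require Import all_boot zify.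
Set Implicit Arguments. Unset Strict Implicit. Unset Printing Implicit Defensive.

(* Call a Hamiltonian path of R(3,n) starting with the edge (2,1)(1,1) a corner
   path; reversing one ending at s handles the case t = (2,1).  Corner paths
   ending at t are built by induction on n, keeping a horizontal edge in the top
   row whenever t is not in that row.  If t lies below row n-1, such an edge
   (a,b) of a corner path of R(3,n-1) is replaced by the detour a, row n, b.
   If t lies in one of the two top rows, a corner path of R(3,n-2) ending two
   rows below t is shifted up by two rows and prefixed with the Hamiltonian
   path (2,1)(1,1)(1,2)(2,2)(3,1)(3,2) of the two bottom rows.  The cases
   n <= 4 are checked on explicit paths. *)

Lemma sg_adjC : symmetric sg_adj.
Proof. by move=> u v; rewrite /sg_adj eq_sym maxnC minnC (maxnC u.2) (minnC u.2). Qed.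

Lemma has_consecutiveP (T : Type) (P : pred (T * T)) (Q : seq T) :
  reflect (exists A a b B, Q = A ++ a :: b :: B /\ P (a, b))
          (has P (zip Q (behead Q))).
Proof.
apply: (iffP idP).
  elim: Q => [|x [|y Q] IH] //= /orP [Pxy | /IH [A [a [b [B [-> Pab]]]]]].
    by exists [::], x, y, Q.
  by exists (x :: A), a, b, B.
move=> [A [a [b [B [-> Pab]]]]]; elim: A => [|x A IH] /=; first by rewrite Pab.
by case: A IH => [|y A] /= ->; rewrite orbT.
Qed.

Lemma ham_path_rev m n s t Q : ham_path m n s t Q -> ham_path m n t s (rev Q).
Proof.
move=> [hd lst uQ memQ sQ]; split.
- by case/lastP: Q hd lst {uQ memQ sQ} => [|Q x] //= _; rewrite rev_rcons last_rcons.
- by case: Q hd lst {uQ memQ sQ} => [|x Q] //= -> _; rewrite rev_cons last_rcons.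
- by rewrite rev_uniq.
- by move=> v; rewrite mem_rev memQ.
- by rewrite rev_sorted (eq_sorted (e' := sg_adj)) // => u v; rewrite sg_adjC.
Qed.

Lemma path_has_edge_rev Q u v : path_has_edge (rev Q) u v = path_has_edge Q u v.
Proof.
suff rev_edge R : path_has_edge R u v -> path_has_edge (rev R) u v.
  by apply/idP/idP => /rev_edge //; rewrite revK.
move=> /has_consecutiveP [A [a [b [B [-> ab]]]]]; apply/has_consecutiveP.
exists (rev B), b, a, (rev A); split; first by rewrite rev_cat !rev_cons -!cats1 -!catA.
by case/orP: ab => /eqP [-> ->]; rewrite eqxx ?orbT.
Qed.

Definition grid (m n : nat) : seq vertex := [seq (x, y) | x <- iota 1 m, y <- iota 1 n].

Lemma mem_grid m n v : (v \in grid m n) = in_R m n v.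
Proof.
case: v => x y; apply/allpairsP/idP => [[[x' y'] /=] | vR].
  by rewrite !mem_iota /in_R => -[? ? [-> ->]] /=; rewrite -!andbA; lia.
by exists (x, y); move: vR; rewrite /= !mem_iota /in_R /=; split=> //; lia.
Qed.

Lemma grid_uniq m n : uniq (grid m n).
Proof. by apply: allpairs_uniq; rewrite ?iota_uniq // => -[? ?] [? ?] _ _ [-> ->]. Qed.

Definition ham_pathb (m n : nat) (s t : vertex) (Q : seq vertex) : bool :=
  [&& head s Q == s, last s Q == t, perm_eq Q (grid m n) & sorted sg_adj Q].

Lemma ham_pathP m n s t Q : reflect (ham_path m n s t Q) (ham_pathb m n s t Q).
Proof.
apply: (iffP and4P) => [[/eqP hd /eqP lst QG sQ] | [-> -> uQ memQ ->]].
  split; rewrite ?(perm_uniq QG) ?grid_uniq // => v.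
  by rewrite (perm_mem QG) mem_grid.
by rewrite !eqxx uniq_perm ?grid_uniq // => v; rewrite memQ mem_grid.
Qed.

Definition shift_up (k : nat) (v : vertex) : vertex := (v.1, v.2 + k).

Lemma shift_up_inj k : injective (shift_up k).
Proof. by move=> [x y] [x' y'] [-> /eqP]; rewrite eqn_add2r => /eqP ->. Qed.

Lemma sg_adj_shift_up k u v : sg_adj (shift_up k u) (shift_up k v) = sg_adj u v.
Proof.
by case: u v => [x y] [x' y']; rewrite /sg_adj /shift_up /= !xpair_eqE; apply/idP/idP; lia.
Qed.

Lemma mem_map_shift_up k v Q :
  (v \in map (shift_up k) Q) = (k <= v.2) && ((v.1, v.2 - k) \in Q).
Proof.
case: v => x y /=; case: leqP => [ky | yk].
  have -> : (x, y) = shift_up k (x, y - k) by rewrite /shift_up /=; congr pair; lia.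
  by rewrite mem_map //; exact: shift_up_inj.
by apply/mapP => -[[x' y'] _ [_ E]]; lia.
Qed.

Lemma in_R_add m k n v :
  in_R m (k + n) v = in_R m k v || (k <= v.2) && in_R m n (v.1, v.2 - k).
Proof. by case: v => x y; rewrite /in_R /=; apply/idP/idP; lia. Qed.

Lemma ham_path_stack m k n s p s' t P Q :
  ham_path m k s p (s :: P) -> ham_path m n s' t (s' :: Q) ->
  sg_adj p (shift_up k s') ->
  ham_path m (k + n) s (shift_up k t) (s :: P ++ map (shift_up k) (s' :: Q)).
Proof.
move=> [_ Pend uP memP sP] [_ Qend uQ memQ sQ] adj; rewrite /= in Pend Qend sP sQ.
split=> //.
- by rewrite /= last_cat Pend /= last_map Qend.
- rewrite -[s :: P ++ _]cat_cons cat_uniq uP (map_inj_uniq (@shift_up_inj k)) uQ andbT.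
  apply/hasPn => v; rewrite mem_map_shift_up memQ => /andP [kv vR].
  by rewrite memP; move: vR; rewrite /in_R /=; lia.
- by move=> v; rewrite -cat_cons mem_cat memP mem_map_shift_up memQ in_R_add.
- rewrite /= cat_path sP Pend /= adj path_map.
  by rewrite (eq_path (e' := sg_adj)) // => u v; rewrite /relpre /= sg_adj_shift_up.
Qed.

Definition row_edge (y : nat) (e : vertex * vertex) : bool :=
  [&& e.1.2 == y, e.2.2 == y & (e.1.1.+1 == e.2.1) || (e.2.1.+1 == e.1.1)].

Definition has_row_edge (y : nat) (Q : seq vertex) : bool :=
  has (row_edge y) (zip Q (behead Q)).

Lemma has_row_edge_catr y P Q : has_row_edge y Q -> has_row_edge y (P ++ Q).
Proof.
move=> /has_consecutiveP [A [a [b [B [-> ab]]]]]; apply/has_consecutiveP.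
by exists (P ++ A), a, b, B; rewrite catA.
Qed.

Lemma has_row_edge_shift_up k y Q :
  has_row_edge y Q -> has_row_edge (y + k) (map (shift_up k) Q).
Proof.
move=> /has_consecutiveP [A [a [b [B [-> ab]]]]]; apply/has_consecutiveP.
exists (map (shift_up k) A), (shift_up k a), (shift_up k b), (map (shift_up k) B).
by rewrite map_cat; split=> //; move: ab; rewrite /row_edge /= !eqn_add2r.
Qed.

Definition row_between (a b : vertex) (y : nat) : seq vertex :=
  if a.1 < b.1 then [:: (1, y); (2, y); (3, y)] else [:: (3, y); (2, y); (1, y)].

Lemma mem_row_between a b y v :
  (v \in row_between a b y) = (v.2 == y) && (1 <= v.1 <= 3).
Proof.
by case: v => x y'; rewrite /row_between; case: ifP => _; rewrite !inE !xpair_eqE /=;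
  apply/idP/idP; lia.
Qed.

Lemma row_between_detour n a b :
  in_R 3 n a -> in_R 3 n b -> row_edge n (a, b) ->
  path sg_adj a (row_between a b n.+1 ++ [:: b]).
Proof.
case: a b => [x y] [x' y']; rewrite /row_between /row_edge /in_R /=.
by case: ifP; rewrite /= /sg_adj /= !xpair_eqE; lia.
Qed.

Lemma ham_path_insert_row n s t A a b B :
  ham_path 3 n s t (A ++ a :: b :: B) -> row_edge n (a, b) ->
  ham_path 3 n.+1 s t (A ++ a :: row_between a b n.+1 ++ b :: B).
Proof.
move=> [hd lst uQ memQ sQ] ab; set N := row_between a b n.+1.
have aR : in_R 3 n a by rewrite -memQ mem_cat mem_head orbT.
have bR : in_R 3 n b by rewrite -memQ mem_cat !inE eqxx !orbT.
have QN : perm_eq (A ++ a :: N ++ b :: B) (N ++ A ++ a :: b :: B).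
  by rewrite -[A ++ _ :: N ++ _]cat_rcons perm_catCA cat_rcons.
split.
- by case: A hd {lst uQ memQ sQ QN}.
- by rewrite last_cat /= last_cat -lst last_cat.
- rewrite (perm_uniq QN) cat_uniq uQ andbT; apply/andP; split.
    by rewrite /N /row_between; case: ifP.
  by apply/hasPn => -[x y]; rewrite memQ mem_row_between /in_R /=; lia.
- by move=> [x y]; rewrite (perm_mem QN) mem_cat memQ mem_row_between /in_R /=;
    apply/idP/idP; lia.
- move: sQ; rewrite !sorted_cat_cons /= => /and3P [-> _ pB] /=.
  by move: (row_between_detour aR bR ab); rewrite -/N !cat_path /= pB !andbT.
Qed.

Definition corner_path (n : nat) (t : vertex) (T : seq vertex) : Prop :=
  ham_path 3 n (2, 1) t [:: (2, 1), (1, 1) & T].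

Lemma corner_path_insert_row n t T :
  corner_path n t T -> has_row_edge n T ->
  exists T', corner_path n.+1 t T' /\ has_row_edge n.+1 T'.
Proof.
move=> HT /has_consecutiveP [A [a [b [B [ET ab]]]]]; rewrite {}ET in HT.
exists (A ++ a :: row_between a b n.+1 ++ b :: B); split.
  exact: (ham_path_insert_row (A := [:: (2, 1), (1, 1) & A])).
apply/has_consecutiveP; rewrite /row_between; case: ifP => _.
  exists (rcons A a), (1, n.+1), (2, n.+1), [:: (3, n.+1), b & B].
  by rewrite cat_rcons /row_edge /= !eqxx.
exists (rcons A a), (3, n.+1), (2, n.+1), [:: (1, n.+1), b & B].
by rewrite cat_rcons /row_edge /= !eqxx.
Qed.

Definition bottom_rows : seq vertex :=
  [:: (2, 1); (1, 1); (1, 2); (2, 2); (3, 1); (3, 2)].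

Lemma ham_path_bottom_rows : ham_path 3 2 (2, 1) (3, 2) bottom_rows.
Proof. exact/ham_pathP. Qed.

Definition admissible_end (n : nat) (t : vertex) : bool :=
  [&& t != (2, 1), t != (1, 1) & (n == 2) ==> (t.1 != 2) && (t != (1, 2))].

Definition small_corner_paths : seq (seq vertex) :=
 [:: [:: (1,2); (2,2); (3,2); (3,1)];
     [:: (1,2); (2,2); (3,1); (3,2)];
     [:: (2,2); (3,1); (3,2); (3,3); (2,3); (1,3); (1,2)];
     [:: (1,2); (2,2); (3,1); (3,2); (3,3); (2,3); (1,3)];
     [:: (1,2); (1,3); (2,3); (3,3); (3,2); (3,1); (2,2)];
     [:: (1,2); (1,3); (2,2); (3,1); (3,2); (3,3); (2,3)];
     [:: (1,2); (1,3); (2,2); (2,3); (3,3); (3,2); (3,1)];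
     [:: (1,2); (1,3); (2,3); (3,3); (2,2); (3,1); (3,2)];
     [:: (1,2); (1,3); (2,2); (3,1); (3,2); (2,3); (3,3)];
     [:: (2,2); (3,1); (3,2); (2,3); (3,3); (3,4); (2,4); (1,4); (1,3); (1,2)];
     [:: (1,2); (2,2); (3,1); (3,2); (2,3); (3,3); (3,4); (2,4); (1,4); (1,3)];
     [:: (1,2); (1,3); (2,2); (3,1); (3,2); (2,3); (3,3); (3,4); (2,4); (1,4)];
     [:: (1,2); (1,3); (1,4); (2,3); (2,4); (3,4); (3,3); (3,2); (3,1); (2,2)];
     [:: (1,2); (1,3); (1,4); (2,4); (3,4); (3,3); (2,2); (3,1); (3,2); (2,3)];
     [:: (1,2); (1,3); (1,4); (2,3); (2,2); (3,1); (3,2); (3,3); (3,4); (2,4)];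
     [:: (1,2); (1,3); (1,4); (2,3); (2,4); (3,4); (3,3); (2,2); (3,2); (3,1)];
     [:: (1,2); (1,3); (1,4); (2,3); (2,4); (3,4); (3,3); (2,2); (3,1); (3,2)];
     [:: (1,2); (1,3); (1,4); (2,4); (3,4); (2,3); (2,2); (3,1); (3,2); (3,3)];
     [:: (1,2); (1,3); (1,4); (2,3); (2,2); (3,1); (3,2); (3,3); (2,4); (3,4)]].

Lemma small_corner_paths_complete :
  all (fun n => all (fun t => admissible_end n t ==>
        has (fun T => ham_pathb 3 n (2, 1) t [:: (2, 1), (1, 1) & T]
                      && ((t.2 < n) ==> has_row_edge n T)) small_corner_paths)
      (grid 3 n)) [:: 2; 3; 4].
Proof. by []. Qed.

Lemma corner_path_exists n t :
  2 <= n -> in_R 3 n t -> admissible_end n t ->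
  exists T, corner_path n t T /\ (t.2 < n -> has_row_edge n T).
Proof.
elim/ltn_ind: n t => n IH t n2 tR adm.
have [n_small | n_large] := leqP n 4.
  have /allP/(_ t) := allP small_corner_paths_complete n ltac:(rewrite !inE; lia).
  rewrite mem_grid tR adm => /(_ isT) /hasP [T _ /andP [/ham_pathP HT HE]].
  by exists T; split=> // /(implyP HE).
case: t tR adm => x y tR adm.
have [top | below] := leqP n.-1 y.
  have [||||T [HT HE]] := IH (n - 2) _ (x, y - 2).
  - lia.
  - lia.
  - by move: tR; rewrite /in_R /=; lia.
  - by move: adm; rewrite /admissible_end /= !xpair_eqE; lia.
  have -> : n = 2 + (n - 2) by lia.
  have -> : (x, y) = shift_up 2 (x, y - 2) by rewrite /shift_up /=; congr pair; lia.
  exists ([:: (1, 2); (2, 2); (3, 1); (3, 2); (2, 3); (1, 3)] ++ map (shift_up 2) T).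
  split; first exact: ham_path_stack ham_path_bottom_rows HT _.
  move=> y_lt; rewrite addnC; apply: has_row_edge_catr; apply: has_row_edge_shift_up.
  by apply: HE; move: y_lt; rewrite /=; lia.
have [||||T [HT HE]] := IH n.-1 _ (x, y).
- lia.
- lia.
- by move: tR; rewrite /in_R /=; lia.
- by move: adm; rewrite /admissible_end /= !xpair_eqE; lia.
have [T' [HT' HE']] := corner_path_insert_row HT (HE below).
by exists T'; rewrite -(ltn_predK n_large).
Qed.

Theorem lemma5 (n : nat) (s t : vertex) :
  2 <= n ->
  in_R 3 n s -> in_R 3 n t -> s != t ->
  (* (F1) fails *)
  ~ (n = 2 /\ s.1 = 2 /\ t.1 = 2) ->
  (* (F2) fails *)
  ~ ((n = 2 /\ ((s, t) \in [:: ((1,1),(2,1)); ((2,1),(1,1));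
                                ((1,1),(2,2)); ((2,2),(1,1));
                                ((2,1),(1,2)); ((1,2),(2,1))]))
     \/ (3 <= n /\ ((s == (1,1)) && (t == (2,1)) || (s == (2,1)) && (t == (1,1))))) ->
  (s = (2,1) \/ t = (2,1)) ->
  exists Q : seq vertex, ham_path 3 n s t Q /\ path_has_edge Q (1,1) (2,1).
Proof.
move=> n2 sR tR st F1 F2 st21.
wlog s21 : s t sR tR st F1 F2 {st21} / s = (2, 1).
  move=> corner; case: st21 => [| t21]; first exact: corner.
  have [|||Q [HQ QE]] := corner t s tR sR _ _ _ t21.
  - by rewrite eq_sym.
  - by case=> ? [? ?]; apply: F1.
  - case=> [[n_2 ts] | [n_3 ts]]; apply: F2; [left | right]; split=> //.
      by move: ts; rewrite !inE => /orP [|/orP [|/orP [|/orP [|/orP []]]]] /eqP [-> ->].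
    by case/orP: ts => /andP [-> ->]; rewrite ?orbT.
  by exists (rev Q); rewrite path_has_edge_rev; split=> //; apply: ham_path_rev.
subst s; have adm : admissible_end n t.
  rewrite /admissible_end eq_sym st /=; apply/andP; split.
    apply/eqP => t11; apply: F2; rewrite t11.
    by have [n_2 | n_3] := ltnP n 3; [left; split=> //; lia | right].
  apply/implyP => /eqP n_2; apply/andP; split; first by apply/eqP => t1; apply: F1.
  by apply/eqP => t12; apply: F2; left; rewrite t12.
have [T [HT _]] := corner_path_exists n2 tR adm.
by exists [:: (2, 1), (1, 1) & T]; split=> //; rewrite /path_has_edge /= eqxx orbT.
Qed.
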